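(* Let $n\in\mathbb{N}$ and let $Z$ be a finite right $\mathrm{End}(\mathbb{F}^n)$-set. Then there exists $t\in\mathbb{N}$ such that the composite $X_Z\to G_Z\twoheadrightarrow q_tG_Z$ is a monomorphism. In particular, $X_Z$ is a finite presheaf of degree at most $t$.
   Context: $p$ prime, $\mathbb{F}=\mathbb{F}_p$, $\mathscr{V}_f$ finite-dimensional $\mathbb{F}$-vector spaces; presheaves are contravariant functors on $\mathscr{V}_f$. $\mathscr{F}$ is the abelian category of functors $\mathscr{V}_f^{\mathrm{op}}\to$ ($\mathbb{F}$-vector spaces); a functor is finite if it has a finite composition series. Polynomial degree in $\mathscr{F}$ is in the sense of Eilenberg–MacLane (vanishing of the $(t+1)$-st cross-effect); $q_t:\mathscr{F}\to\mathscr{F}$ is left adjoint to the inclusion of functors of polynomial degree $\le t$, and $F\twoheadrightarrow q_tF$ is the universal map to a polynomial functor of degree $\le t$. $X_Z$ is the presheaf $V\mapsto Z\times_{\mathrm{End}(\mathbb{F}^n)}\mathrm{Hom}(V,\mathbb{F}^n)$, $G_Z\in\mathscr{F}$ is $V\mapsto\mathbb{F}[Z]\otimes_{\mathbb{F}[\mathrm{End}(\mathbb{F}^n)]}\mathbb{F}[\mathrm{Hom}(V,\mathbb{F}^n)]$, and $X_Z\to G_Z$ is induced by $Z\hookrightarrow\mathbb{F}[Z]$. A presheaf $X$ taking finite values is finite of degree at most $t$ if the composite $X\hookrightarrow\mathbb{F}[X]\twoheadrightarrow q_t\mathbb{F}[X]$ is a monomorphism ($\mathbb{F}[X]$ the sectionwise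 linearization); equivalently $X$ embeds in a finite functor of $\mathscr{F}$ of polynomial degree $\le t$. *)

(* Skeleton of V_f: objects are dimensions d : nat (F^d),
   a linear map F^d' -> F^d is a matrix 'M_(d, d') acting on column vectors,
   so composition a o b is a *m b. *)
From mathcomp Require Import all_boot all_order all_algebra.
From Stdlib Require Import Relations.
Set Implicit Arguments. Unset Strict Implicit. Unset Printing Implicit Defensive.
Import GRing.Theory.
Local Open Scope ring_scope.

Section Defs.
Variable p : nat.
Local Notation F := 'F_p.

(* linear map F[A] -> F[B] induced by a map of sets h : A -> B *)
Definition push (A B : finType) (h : A -> B) (phi : {ffun A -> F}) : {ffun B -> F} :=
  [ffun y => \sum_(x | h x == y) phi x].

Definition delta (A : finType) (x : A) : {ffun A -> F} := [ffun y => (y == x)%:R].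

Definition fscale (A : finType) (a : F) (phi : {ffun A -> F}) : {ffun A -> F} :=
  [ffun x => a * phi x].

Variables (n : nat) (Z : finType) (act : Z -> 'M[F]_n -> Z).

(* Z x Hom(F^d, F^n) ; Hom(F^d,F^n) = 'M_(n,d) *)
Local Notation Pt d := (Z * 'M[F]_(n, d))%type.

(* X_Z(F^d) = Z x_{End(F^n)} Hom(F^d,F^n): the quotient of Z x Hom(F^d,F^n)
   by the equivalence generated by (z.e, f) ~ (z, e o f). *)
Definition xrel d : relation (Pt d) :=
  fun x y => exists z e f, x = (act z e, f) /\ y = (z, e *m f).
Definition xeq d : relation (Pt d) := @clos_refl_sym_trans (Pt d) (@xrel d).

(* F[Z x Hom(-,F^n)] on morphisms: for g : F^d' -> F^d, (z,f) |-> (z, f o g) *)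
Definition Gmap d d' (g : 'M[F]_(d, d')) : {ffun Pt d -> F} -> {ffun Pt d' -> F} :=
  push (fun x : Pt d => (x.1, x.2 *m g)).

(* Direct sum decomposition F^d = V_1 (+) ... (+) V_m into coordinate blocks
   given by b : 'I_d -> 'I_m;  proj b I = idempotent projecting onto (+)_{i in I} V_i *)
Definition proj d m (b : 'I_d -> 'I_m) (I : {set 'I_m}) : 'M[F]_d :=
  \matrix_(i, j) ((i == j) && (b i \in I))%:R.

(* the idempotent  sum_I (-1)^(m-|I|) G(e_I)  whose image is the m-th cross-effect *)
Definition cross d m (b : 'I_d -> 'I_m) (phi : {ffun Pt d -> F}) : {ffun Pt d -> F} :=
  \sum_(I : {set 'I_m}) fscale ((-1) ^+ (m - #|I|)) (Gmap (proj b I) phi).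

(* K is a subfunctor of F[Z x Hom(-,F^n)] containing the tensor relations
   [z.e, f] - [z, e o f]; i.e. K corresponds to a subfunctor of
   G_Z = F[Z] (x)_{F[End F^n]} F[Hom(-,F^n)]. *)
Definition Gsubfunctor (K : forall d, {ffun Pt d -> F} -> Prop) : Prop :=
  [/\ (forall d, K d 0),
      (forall d phi psi, K d phi -> K d psi -> K d (phi + psi)),
      (forall d (a : F) phi, K d phi -> K d (fscale a phi)),
      (forall d d' (g : 'M[F]_(d, d')) phi, K d phi -> K d' (Gmap g phi)) &
      (forall d z (e : 'M[F]_n) (f : 'M[F]_(n, d)),
          K d (delta (act z e, f) - delta (z, e *m f)))].

(* the quotient functor G_Z / K has polynomial degree <= t:
   its (t+1)-st cross-effect vanishes for all V_1, ..., V_{t+1} *)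
Definition quot_deg_le (t : nat) (K : forall d, {ffun Pt d -> F} -> Prop) : Prop :=
  forall d (b : 'I_d -> 'I_t.+1) (phi : {ffun Pt d -> F}), K d (cross b phi).

(* kernel of F[Z x Hom(F^d,F^n)] ->> G_Z(F^d) ->> q_t G_Z(F^d):
   the intersection of all subfunctors K with G_Z/K of degree <= t *)
Definition qt_ker (t d : nat) (phi : {ffun Pt d -> F}) : Prop :=
  forall K, Gsubfunctor K -> quot_deg_le t K -> K d phi.

End Defs.

(* For h : F^m -> F^d and w in Z x Hom(F^m, F^n), the functional on
   F[Z x Hom(F^d, F^n)] that evaluates [x] to 1 exactly when x o h is equivalent
   to w kills the tensor relations, and the common kernel K of all these
   functionals is a subfunctor.  Evaluated on a cross-effect, such a functional
   becomes an alternating sum, over subsets I, of a function of the partial sums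
   of vectors u_j in the finite group Hom(F^m, F^n) of exponent p.  With more
   than (p - 1) |Hom(F^m, F^n)| vectors one of them repeats p times, and the
   p-th difference (T_v - 1)^p = T_(pv) - 1 = 0 in characteristic p kills the
   sum; so G_Z / K has bounded degree.  For m = n + n, any two f, f' : F^d -> F^n
   factor through (f, f') : F^d -> F^(n+n), so a test at level n + n separates
   inequivalent elements. *)

From mathcomp Require Import all_boot all_order all_algebra.
From Stdlib Require Import Relations ClassicalDescription.
Set Implicit Arguments.
Unset Strict Implicit.
Unset Printing Implicit Defensive.

Import GRing.Theory.
Local Open Scope ring_scope.

Section Differences.
Variables (R : nzRingType) (A : zmodType).

Definition fdiff (v : A) (g : A -> R) : A -> R := fun a => g (a + v) - g a.

Lemma iter_fdiffE v k g a :
  iter k (fdiff v) g a = \sum_(j < k.+1) (('X - 1 : {poly R}) ^+ k)`_j * g (a + v *+ j).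
Proof.
elim: k g a => [|k IH] g a.
  by rewrite big_ord1 expr0 coef1 /= mul1r mulr0n addr0.
rewrite iterSr IH exprSr mulrBr mulr1.
set q := ('X - 1 : {poly R}) ^+ k.
have size_q : size q = k.+1 by rewrite /q -polyC1 size_exp_XsubC.
under [RHS]eq_bigr do rewrite coefB coefMX mulrBl.
rewrite sumrB (big_ord_recl k.+1) /= mul0r add0r (big_ord_recr k.+1) /=.
rewrite [q`_k.+1]nth_default ?size_q // mul0r addr0 /fdiff.
under eq_bigr do rewrite mulrBr.
rewrite sumrB; congr (_ - _); apply: eq_bigr => j _.
by rewrite /bump /= add1n mulrSr addrA.
Qed.

Variables (T : finType) (u : T -> A).
Implicit Types (U W : {set T}) (g : A -> R).

Definition cross_diff U g : R :=
  \sum_(I : {set T} | I \subset U) (-1) ^+ (#|U| - #|I|) * g (\sum_(j in I) u j).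

Lemma cross_diffD1 U g x :
  x \in U -> cross_diff U g = cross_diff (U :\ x) (fdiff (u x) g).
Proof.
move=> xU; rewrite /cross_diff (bigID (fun I : {set T} => x \in I)) /= addrC.
have cardU : #|U| = #|U :\ x|.+1 by rewrite (cardsD1 x U) xU.
rewrite /fdiff; under [RHS]eq_bigr do rewrite mulrBr.
rewrite sumrB addrC; congr (_ + _); last first.
  rewrite -sumrN; apply: eq_big => [I|I]; first by rewrite (subsetD1 I U x).
  move=> /andP[sIU xI]; rewrite cardU subSn ?exprS ?mulN1r ?mulNr //.
  by apply: subset_leq_card; rewrite subsetD1 sIU xI.
rewrite (reindex_onto (fun J => x |: J) (fun I => I :\ x)); last first.
  by move=> I /andP[_ xI]; rewrite setD1K.
apply: eq_big => [J|J].
  rewrite subsetD1 subUset sub1set xU setU11 andbT /=.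
  have [xJ|xJ] := boolP (x \in J); last by rewrite setU1K // eqxx.
  rewrite andbF; case: eqP => [eJ|_]; last by rewrite andbF.
  by move: xJ; rewrite -eJ !inE eqxx.
move=> /andP[_ /eqP eJ]; have xJ : x \notin J by rewrite -eJ !inE eqxx.
by rewrite cardsU1 xJ cardU subSS big_setU1 //= addrC.
Qed.

Lemma cross_diff_const U W g v : W \subset U -> {in W, forall x, u x = v} ->
  cross_diff U g = cross_diff (U :\: W) (iter #|W| (fdiff v) g).
Proof.
move cardW: #|W| => k; elim: k U W g cardW => [|k IH] U W g cardW sWU uW.
  by move/cards0_eq: cardW => ->; rewrite setD0.
have /card_gt0P [x xW] : (0 < #|W|)%N by rewrite cardW.
rewrite (cross_diffD1 g (subsetP sWU x xW)) uW //.
have cardWx : #|W :\ x| = k by move: cardW; rewrite (cardsD1 x W) xW add1n => -[].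
rewrite (IH _ (W :\ x) _ cardWx); first last.
- by move=> y /setD1P[_ yW]; apply: uW.
- exact: setSD.
rewrite iterSr; congr cross_diff; apply/setP => y; rewrite !inE.
by case: eqVneq => [->|]; rewrite ?xW.
Qed.

Variable p : nat.
Hypothesis pcharRp : p \in [pchar R].

Lemma XsubC1_exp_pchar : ('X - 1 : {poly R}) ^+ p = 'X^p - 1.
Proof.
have pcharPp : p \in [pchar {poly R}] by rewrite pchar_poly.
have := pFrobenius_autB_comm pcharPp (commr1 'X).
by rewrite !pFrobenius_autE expr1n.
Qed.

Lemma iter_fdiff_pchar v g : iter p (fdiff v) g =1 fdiff (v *+ p) g.
Proof.
move=> a; rewrite iter_fdiffE XsubC1_exp_pchar.
under eq_bigr do rewrite coefB coefXn coef1 mulrBl.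
rewrite sumrB big_ord_recr /= eqxx big1 ?add0r; last first.
  by move=> j _; rewrite ltn_eqF // mul0r.
rewrite big_ord_recl /= big1 ?addr0; last by move=> j _; rewrite mul0r.
by rewrite !mul1r.
Qed.

Hypothesis pA : forall v : A, v *+ p = 0.

Lemma iter_fdiff_ge v k g a : (p <= k)%N -> iter k (fdiff v) g a = 0.
Proof.
move=> le_pk; rewrite -(subnK le_pk) iterD.
elim: (k - p)%N a => [|j IH] a /=.
  by rewrite iter_fdiff_pchar /fdiff pA addr0 subrr.
by rewrite /fdiff !IH subrr.
Qed.

End Differences.

Lemma exists_fiber_gt (T A : finType) (u : T -> A) k :
  (k * #|A| < #|T|)%N -> exists v, (k < #|[set x | u x == v]|)%N.
Proof.
move=> ltT; apply/existsP; apply: contraLR ltT => /existsPn small_fibers.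
rewrite -leqNgt -sum1_card (partition_big u predT) //= mulnC -sum_nat_const.
apply: leq_sum => v _; have := small_fibers v; rewrite -leqNgt; apply: leq_trans.
by rewrite sum1_card cardsE.
Qed.

Lemma cross_diff_eq0 (R : nzRingType) p (A : finZmodType) (T : finType) (u : T -> A) g :
  p \in [pchar R] -> (forall v : A, v *+ p = 0) ->
  (p.-1 * #|A| < #|T|)%N -> cross_diff u [set: T] g = 0 :> R.
Proof.
move=> pcharRp pA /(exists_fiber_gt u)[v]; set W := [set x | u x == v] => large_W.
have uW : {in W, forall x, u x = v} by move=> x; rewrite inE => /eqP.
rewrite (cross_diff_const g (subsetT W) uW).
rewrite /cross_diff big1 // => I _; rewrite (iter_fdiff_ge pcharRp pA) ?mulr0 //.
by rewrite -(prednK (prime_gt0 (pcharf_prime pcharRp))).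
Qed.

Section Pairing.
Variable p : nat.
Local Notation F := 'F_p.
Variable D : finType.
Implicit Types (c : D -> F) (phi psi : {ffun D -> F}).

Definition dotf c phi : F := \sum_x phi x * c x.

Lemma eq_dotf c c' phi : c =1 c' -> dotf c phi = dotf c' phi.
Proof. by move=> eq_c; apply: eq_bigr => x _; rewrite eq_c. Qed.

Lemma dotf0 c : dotf c 0 = 0.
Proof. by rewrite /dotf big1 // => x _; rewrite ffunE mul0r. Qed.

Lemma dotfD c phi psi : dotf c (phi + psi) = dotf c phi + dotf c psi.
Proof. by rewrite /dotf -big_split; apply: eq_bigr => x _; rewrite ffunE mulrDl. Qed.

Lemma dotfB c phi psi : dotf c (phi - psi) = dotf c phi - dotf c psi.
Proof. by rewrite /dotf -sumrB; apply: eq_bigr => x _; rewrite !ffunE mulrBl. Qed.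

Lemma dotfZ c a phi : dotf c (fscale a phi) = a * dotf c phi.
Proof. by rewrite /dotf mulr_sumr; apply: eq_bigr => x _; rewrite ffunE mulrA. Qed.

Lemma dotf_sum c (I : finType) (P : pred I) (G : I -> {ffun D -> F}) :
  dotf c (\sum_(i | P i) G i) = \sum_(i | P i) dotf c (G i).
Proof. exact: (big_morph _ (dotfD c) (dotf0 c)). Qed.

Lemma dotf_delta c x : dotf c (delta p x) = c x.
Proof.
rewrite /dotf (bigD1 x) //= ffunE eqxx mul1r big1 ?addr0 // => y /negbTE yx.
by rewrite ffunE yx mul0r.
Qed.

End Pairing.

Lemma dotf_push p (D D' : finType) (h : D' -> D) (c : D -> 'F_p) (phi : {ffun D' -> 'F_p}) :
  dotf c (push h phi) = dotf (c \o h) phi.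
Proof.
rewrite /dotf [RHS](partition_big h predT) //=.
apply: eq_bigr => y _; rewrite ffunE mulr_suml.
by apply: eq_bigr => x /eqP <-.
Qed.

Lemma proj_sum1 p d t (b : 'I_d -> 'I_t) (I : {set 'I_t}) :
  proj p b I = \sum_(j in I) proj p b [set j].
Proof.
apply/matrixP => i i'; rewrite summxE; under eq_bigr do rewrite mxE.
rewrite mxE; case: (i == i') => /=; last by rewrite big1.
under eq_bigr do rewrite in_set1.
have [bI|bI] := boolP (b i \in I).
  rewrite (bigD1 (b i)) //= eqxx big1 ?addr0 // => j /andP[_ /negbTE].
  by rewrite eq_sym => ->.
by rewrite big1 // => j jI; rewrite (negbTE (contraNneq _ bI)) // => ->.
Qed.

Section ClassTests.
Variable p : nat.
Local Notation F := 'F_p.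
Variables (n : nat) (Z : finType) (act : Z -> 'M[F]_n -> Z).
Local Notation Pt d := (Z * 'M[F]_(n, d))%type.

Lemma dotf_Gmap d d' (g : 'M[F]_(d, d')) (c : Pt d' -> F) phi :
  dotf c (Gmap g phi) = dotf (fun x => c (x.1, x.2 *m g)) phi.
Proof. exact: dotf_push. Qed.

Lemma dotf_cross d t (b : 'I_d -> 'I_t) (c : Pt d -> F) phi :
  dotf c (cross b phi) =
  dotf (fun x => \sum_(I : {set 'I_t}) (-1) ^+ (t - #|I|) * c (x.1, x.2 *m proj p b I)) phi.
Proof.
rewrite /cross dotf_sum; under eq_bigr do rewrite dotfZ dotf_Gmap /dotf mulr_sumr.
rewrite exchange_big; apply: eq_bigr => x _; rewrite mulr_sumr.
by apply: eq_bigr => I _; rewrite mulrCA.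
Qed.

Lemma xeq_mulmxr d d' (g : 'M[F]_(d, d')) (x y : Pt d) :
  xeq act x y -> xeq act (x.1, x.2 *m g) (y.1, y.2 *m g).
Proof.
elim=> {x y} [x y [z [e [f [-> ->]]]]|x|x y _ IH|x y w _ IH1 _ IH2].
- by apply: rst_step; exists z, e, (f *m g); rewrite mulmxA.
- exact: rst_refl.
- exact: rst_sym.
- exact: rst_trans IH1 IH2.
Qed.

Definition xind d (w x : Pt d) : F :=
  if excluded_middle_informative (xeq act x w) then 1 else 0.

Lemma xind_refl d (w : Pt d) : xind w w = 1.
Proof. by rewrite /xind; case: excluded_middle_informative => // - []; apply: rst_refl. Qed.

Lemma xind_neq0 d (w x : Pt d) : xind w x != 0 -> xeq act x w.
Proof. by rewrite /xind; case: excluded_middle_informative; rewrite ?eqxx. Qed.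

Lemma xind_xeq d (w x y : Pt d) : xeq act x y -> xind w x = xind w y.
Proof.
move=> xy; rewrite /xind.
case: excluded_middle_informative => xw; case: excluded_middle_informative => yw //.
  by case: yw; apply: rst_trans xw; apply: rst_sym.
by case: xw; apply: rst_trans xy yw.
Qed.

Definition class_test m d (h : 'M[F]_(d, m)) (w : Pt m) (x : Pt d) : F :=
  xind w (x.1, x.2 *m h).

Definition class_ker m d (phi : {ffun Pt d -> F}) : Prop :=
  forall (h : 'M[F]_(d, m)) (w : Pt m), dotf (class_test h w) phi = 0.

Lemma class_ker_Gsubfunctor m : Gsubfunctor act (class_ker m).
Proof.
split.
- by move=> d h w; apply: dotf0.
- by move=> d phi psi Kphi Kpsi h w; rewrite dotfD Kphi Kpsi addr0.
- by move=> d a phi Kphi h w; rewrite dotfZ Kphi mulr0.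
- move=> d d' g phi Kphi h w; rewrite dotf_Gmap -(Kphi (g *m h) w).
  by apply: eq_dotf => x; rewrite /class_test /= mulmxA.
- move=> d z e f h w; rewrite dotfB !dotf_delta /class_test /= -mulmxA.
  have rel : xeq act (act z e, f *m h) (z, e *m (f *m h)).
    by apply: rst_step; exists z, e, (f *m h).
  by rewrite (xind_xeq _ rel) subrr.
Qed.

Lemma class_ker_xeq d (x y : Pt d) :
  class_ker (n + n) (delta p x - delta p y) -> xeq act x y.
Proof.
case: x y => [zx fx] [zy fy] Kxy.
pose k := pinvmx (col_mx fx fy).
have [fxk fyk] : fx *m k *m col_mx fx fy = fx /\ fy *m k *m col_mx fx fy = fy.
  have := submx_refl (col_mx fx fy); rewrite col_mx_sub => /andP[sx sy].
  by split; apply: mulmxKpV.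
have := Kxy k (zx, fx *m k); rewrite dotfB !dotf_delta /class_test /= xind_refl.
move/eqP; rewrite subr_eq0 eq_sym => /eqP yk.
have /(xeq_mulmxr (col_mx fx fy)) : xeq act (zy, fy *m k) (zx, fx *m k).
  by apply: xind_neq0; rewrite yk oner_neq0.
by rewrite /= fxk fyk; apply: rst_sym.
Qed.

Lemma class_test_cross m d t (b : 'I_d -> 'I_t) (h : 'M[F]_(d, m)) (w : Pt m) (x : Pt d) :
  \sum_(I : {set 'I_t}) (-1) ^+ (t - #|I|) * class_test h w (x.1, x.2 *m proj p b I) =
  cross_diff (fun j => x.2 *m proj p b [set j] *m h) [set: 'I_t] (fun a => xind w (x.1, a)).
Proof.
rewrite /cross_diff cardsT card_ord; apply: eq_big => [I|I _]; first by rewrite subsetT.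
by rewrite /class_test proj_sum1 mulmx_sumr mulmx_suml.
Qed.

Hypothesis hp : prime p.

Lemma class_ker_deg m t :
  (p.-1 * #|{: 'M[F]_(n, m)}| < t.+1)%N -> quot_deg_le t (class_ker m).
Proof.
move=> large_t d b phi h w; rewrite dotf_cross /dotf big1 // => x _.
have pHom : forall v : 'M[F]_(n, m), v *+ p = 0.
  by move=> v; rewrite -scaler_nat pchar_Fp_0 // scale0r.
by rewrite class_test_cross (cross_diff_eq0 _ _ (pchar_Fp hp)) ?card_ord ?mulr0.
Qed.

End ClassTests.

Theorem theorem5p8 (p : nat) (hp : prime p) (n : nat) (Z : finType)
    (act : Z -> 'M['F_p]_n -> Z)
    (act1 : forall z, act z 1%:M = z)
    (actM : forall z (a b : 'M['F_p]_n), act z (a *m b) = act (act z a) b) :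
  exists t : nat, forall (d : nat) (x y : (Z * 'M['F_p]_(n, d))%type),
    qt_ker act t (delta p x - delta p y) -> xeq act x y.
Proof.
exists (p.-1 * #|{: 'M['F_p]_(n, n + n)}|)%N => d x y qt_xy.
apply: class_ker_xeq; apply: qt_xy.
- exact: class_ker_Gsubfunctor.
- exact: class_ker_deg.
Qed.
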